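(* Let $G$ be a graph with at least two vertices and let $k$ be an integer with $k\ge k(G)$. Then there exists an acyclic digraph $D$ such that (a) $C(D)=G\cup I_k$; (b) $D$ has an acyclic ordering $v_1,\dots,v_{|V(G)|},v_{|V(G)|+1},\dots,v_{|V(G)|+k}$ where $V(G)=\{v_1,\dots,v_{|V(G)|}\}$ and $V(I_k)=\{v_{|V(G)|+1},\dots,v_{|V(G)|+k}\}$; and (c) $N_D^-(v_1)=N_D^-(v_2)=\emptyset$.
   Context: All graphs are finite and simple. For a digraph $D$, its competition graph $C(D)$ is the graph with vertex set $V(D)$ in which two distinct vertices $u,v$ are adjacent iff there is a vertex $x$ with arcs $(u,x),(v,x)\in A(D)$. The competition number $k(G)$ is the smallest nonnegative integer $k$ such that $G$ together with $k$ new isolated vertices is the competition graph of an acyclic digraph. $I_k$ denotes the edgeless graph on $k$ vertices, and $G\cup I_k$ is the disjoint union of $G$ with $k$ new isolated vertices. An acyclic ordering of a digraph $D$ is an ordering $v_1,\dots,v_{|V(D)|}$ of its vertices such that $(v_i,v_j)\in A(D)$ implies $i<j$. $N_D^-(v)=\{x:(x,v)\in A(D)\}$ is the in-neighborhood. *)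

From mathcomp Require Import all_boot.

Set Implicit Arguments. Unset Strict Implicit. Unset Printing Implicit Defensive.

(* A (finite simple) graph on a finType T is a symmetric irreflexive
   relation e : rel T.  A digraph on a finType V is a relation D : rel V,
   with (u,v) an arc iff D u v. *)

Definition acyclic (V : finType) (D : rel V) : Prop :=
  forall x y : V, D x y -> ~~ connect D y x.

Definition compg (V : finType) (D : rel V) : rel V :=
  fun u v => (u != v) && [exists x, D u x && D v x].

Definition union_isol (T : finType) (e : rel T) (k : nat) : rel (T + 'I_k) :=
  fun u v => match u, v with inl a, inl b => e a b | _, _ => false end.

Arguments union_isol {T} e k u v.

Definition is_gvert (T : finType) (k : nat) (x : T + 'I_k) : bool :=
  if x is inl _ then true else false.

Definition comp_realizable (T : finType) (e : rel T) (k : nat) : Prop :=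
  exists D : rel (T + 'I_k), acyclic D /\ compg D =2 union_isol e k.

Definition is_competition_number (T : finType) (e : rel T) (n : nat) : Prop :=
  comp_realizable e n /\ forall j, comp_realizable e j -> n <= j.

From mathcomp Require Import all_boot.
From mathcomp Require Import zify.

Set Implicit Arguments. Unset Strict Implicit. Unset Printing Implicit Defensive.

(* Take an acyclic D0 with C(D0) = G + I_kG, regard it as a digraph on
   G + I_k, and delete every arc whose head has a single in-neighbour.  The
   competition graph does not change, and afterwards every vertex with an
   in-arc has two distinct in-neighbours, which are adjacent in C(D).  Hence
   no arc leaves an isolated vertex, and listing the vertices of G by their
   number of ancestors, followed by the isolated vertices, is an acyclic
   ordering; a vertex with an in-arc comes after two distinct in-neighbours,
   so the first two vertices have none. *)

Section Acyclic.
Variable V : finType.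

Definition depth (D : rel V) (x : V) := #|[pred y | connect D y x]|.

Lemma depth_lt (D : rel V) x y : acyclic D -> D x y -> depth D x < depth D y.
Proof.
move=> D_acyclic Dxy; apply: proper_card; rewrite properE; apply/andP; split.
  by apply/subsetP => z; rewrite !inE => /connect_trans; apply; apply: connect1.
apply/subsetP => /(_ y); rewrite !inE connect0 => /(_ isT).
exact/negP/D_acyclic.
Qed.

Lemma acyclic_rank (D : rel V) (r : V -> nat) :
  (forall x y, D x y -> r x < r y) -> acyclic D.
Proof.
move=> r_lt x y Dxy; apply/negP => /connectP[p p_path y_last].
suff : r y <= r (last y p) by rewrite -y_last; have := r_lt _ _ Dxy; lia.
elim: p y p_path {Dxy y_last} => [|z p IHp] y //= /andP[Dyz z_path].
exact: leq_trans (ltnW (r_lt _ _ Dyz)) (IHp _ z_path).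
Qed.

Lemma acyclic_sub (D D' : rel V) : subrel D' D -> acyclic D -> acyclic D'.
Proof.
move=> D'D D_acyclic x y /D'D/D_acyclic; apply: contra.
by apply: connect_sub => u v /D'D/connect1.
Qed.

End Acyclic.

Section Prune.
Variables (V : finType) (D : rel V).

Definition prune : rel V := fun u w => D u w && (1 < #|[pred x | D x w]|).

Lemma prune_sub : subrel prune D.
Proof. by move=> u w /andP[]. Qed.

Lemma compg_prune : compg prune =2 compg D.
Proof.
move=> u v; rewrite /compg; case: eqVneq => //= u_neq_v.
apply/existsP/existsP => -[x /andP[Dux Dvx]]; exists x.
  by rewrite (prune_sub Dux) (prune_sub Dvx).
have x_in2 : 1 < #|[pred y | D y x]|.
  apply/card_gt1P; exists u, v; by rewrite !inE Dux Dvx u_neq_v.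
by rewrite /prune Dux Dvx x_in2.
Qed.

Lemma prune_competitor u w : prune u w -> exists2 x, x != u & prune x w.
Proof.
case/andP=> _ w_in2; have [x1 [x2 [Dx1 Dx2 x1_neq_x2]]] := card_gt1P w_in2.
rewrite !inE in Dx1 Dx2.
have [x1_u|x1_neq_u] := eqVneq x1 u; last by exists x1; rewrite // /prune Dx1.
by exists x2; rewrite 1?eq_sym -?x1_u // /prune Dx2.
Qed.

End Prune.

Section Comap.
Variables (V W : finType) (f : V -> W) (g : W -> option V).
Hypotheses (fK : pcancel f g) (gK : ocancel g f).

Definition comap_rel (R : rel V) : rel W := fun x y =>
  if (g x, g y) is (Some u, Some w) then R u w else false.

Lemma comap_acyclic (D : rel V) : acyclic D -> acyclic (comap_rel D).
Proof.
move=> D_acyclic; apply: (acyclic_rank (r := fun x => oapp (depth D) 0 (g x))).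
move=> x y; rewrite /comap_rel.
by case: (g x) (g y) => [u|] [w|] //= /depth_lt; apply.
Qed.

Lemma comap_compg (D R : rel V) :
  compg D =2 R -> compg (comap_rel D) =2 comap_rel R.
Proof.
move=> D_R x y; rewrite [RHS]/comap_rel /compg.
have no_arc z t : g z = None -> comap_rel D z t = false by rewrite /comap_rel => ->.
case gx: (g x) => [u|]; last first.
  by apply/negbTE/nandP; right; apply/existsPn => t; rewrite no_arc.
case gy: (g y) => [w|]; last first.
  by apply/negbTE/nandP; right; apply/existsPn => t; rewrite (no_arc y) ?andbF.
have -> : x = f u by rewrite -(gK x) gx.
have -> : y = f w by rewrite -(gK y) gy.
rewrite -D_R /compg (inj_eq (pcan_inj fK)); congr (_ && _).
apply/existsP/existsP => -[t]; rewrite /comap_rel !fK.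
  by case: (g t) => [z|] //; exists z.
by exists (f t); rewrite fK.
Qed.

End Comap.

Section WidenIsolated.
Variables (T : finType) (m n : nat) (le_mn : m <= n).

Definition widen_isol (x : T + 'I_m) : T + 'I_n :=
  match x with inl a => inl a | inr j => inr (widen_ord le_mn j) end.

Definition narrow_isol (x : T + 'I_n) : option (T + 'I_m) :=
  match x with inl a => Some (inl a) | inr j => omap inr (insub (val j)) end.

Lemma widen_isolK : pcancel widen_isol narrow_isol.
Proof. by case=> [a|j] //=; rewrite valK. Qed.

Lemma narrow_isolK : ocancel narrow_isol widen_isol.
Proof.
case=> [a|j] //=; case: insubP => [j' _ j'_j|] //=.
by congr inr; apply: val_inj.
Qed.

Lemma union_isol_widen (e : rel T) :
  union_isol e n =2 comap_rel narrow_isol (union_isol e m).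
Proof.
by case=> [a|i] [b|j]; rewrite /comap_rel //=; do ?case: insubP => [? _ _|_].
Qed.

End WidenIsolated.

Section RankOrder.
Variables (T : finType) (k : nat) (r : T -> nat).

Definition rank_sort := sort (relpre r leq) (enum T).

Lemma size_rank_sort : size rank_sort == #|T|.
Proof. by rewrite size_sort cardE. Qed.

Definition rank_enum : #|T|.-tuple T := Tuple size_rank_sort.

Lemma rank_enum_mono a b : r (tnth rank_enum a) < r (tnth rank_enum b) -> a < b.
Proof.
have x0 := tnth rank_enum a.
apply: contraTT; rewrite -!leqNgt => le_ba; rewrite !(tnth_nth x0).
have le_trans : transitive (relpre r leq) by move=> ? ? ?; apply: leq_trans.
apply: (sorted_leq_nth le_trans (fun x => leqnn (r x))); rewrite ?inE ?size_tuple //.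
exact/sort_sorted/(fun x y => leq_total (r x) (r y)).
Qed.

Lemma rank_enum_inj : injective (tnth rank_enum).
Proof. by apply/tuple_uniqP; rewrite sort_uniq enum_uniq. Qed.

Definition rank_order (i : 'I_(#|T| + k)) : T + 'I_k :=
  match split i with inl a => inl (tnth rank_enum a) | inr j => inr j end.

Lemma rank_order_bij : bijective rank_order.
Proof.
apply: inj_card_bij; last by rewrite card_sum !card_ord.
move=> i j; rewrite /rank_order.
case: splitP => a i_a; case: splitP => b j_b // [] a_b; apply: val_inj.
  by rewrite /= i_a j_b (rank_enum_inj a_b).
by rewrite /= i_a j_b a_b.
Qed.

Lemma rank_order_gvert (i : 'I_(#|T| + k)) : (i < #|T|) = is_gvert (rank_order i).
Proof. by rewrite /rank_order; case: splitP. Qed.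

Definition sum_rank (c : nat) (x : T + 'I_k) := if x is inl a then r a else c.

Lemma rank_order_mono c (i j : 'I_(#|T| + k)) : (forall a, r a < c) ->
  sum_rank c (rank_order i) < sum_rank c (rank_order j) -> i < j.
Proof.
move=> r_lt_c; rewrite /rank_order.
case: splitP => a i_a; case: splitP => b j_b /=.
- by move/rank_enum_mono; rewrite i_a j_b.
- by rewrite i_a j_b ltn_addr.
- by rewrite ltnNge ltnW ?r_lt_c.
- by rewrite ltnn.
Qed.

End RankOrder.

Theorem lemma2p2 (T : finType) (e : rel T)
  (e_sym : symmetric e) (e_irr : irreflexive e) (hT : 2 <= #|T|)
  (kG k : nat) (hkG : is_competition_number e kG) (hk : kG <= k) :
  exists D : rel (T + 'I_k),
    [/\ acyclic D,
        compg D =2 union_isol e k &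
        exists v : 'I_(#|T| + k) -> T + 'I_k,
          [/\ bijective v,
              (forall i : 'I_(#|T| + k), (i < #|T|) = is_gvert (v i)),
              (forall i j : 'I_(#|T| + k), D (v i) (v j) -> i < j) &
              (forall i : 'I_(#|T| + k), i < 2 -> forall y, ~~ D y (v i))]].
Proof.
have [[D0 [D0_acyclic D0_compg]] _] := hkG.
pose D := prune (comap_rel (@narrow_isol T kG k) D0).
have D_acyclic : acyclic D.
  exact: acyclic_sub (@prune_sub _ _) (comap_acyclic D0_acyclic).
have D_compg : compg D =2 union_isol e k.
  move=> x y; rewrite compg_prune (union_isol_widen kG).
  exact: (comap_compg (widen_isolK hk) (narrow_isolK hk) D0_compg).
have isol_no_out_arc j w : ~~ D (inr j) w.
  apply/negP => Djw; have [x x_neq_j Dxw] := prune_competitor Djw.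
  suff : compg D (inr j) x by rewrite D_compg.
  by rewrite /compg eq_sym x_neq_j; apply/existsP; exists w; apply/andP.
pose r a := depth D (inl a); pose c := #|{: T + 'I_k}|.+1.
have r_lt_c a : r a < c by rewrite ltnS max_card.
have D_rank x y : D x y -> sum_rank r c x < sum_rank r c y.
  case: x => [a|j] Dxy; last by rewrite (negbTE (isol_no_out_arc _ _)) in Dxy.
  by case: y Dxy => [b|j] Dxy; [exact: depth_lt D_acyclic Dxy | exact: r_lt_c].
have v_bij := rank_order_bij k r; have [v_inv _ v_invK] := v_bij.
exists D; split => //; exists (rank_order (k := k) r); split => //.
- exact: rank_order_gvert.
- by move=> i j /D_rank; apply: rank_order_mono.
move=> i i_lt2 y; apply/negP => Dy; have [x x_neq_y Dx] := prune_competitor Dy.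
have before_i z : D z (rank_order (k := k) r i) -> v_inv z < i.
  by move=> /D_rank; rewrite -{1}(v_invK z); apply: rank_order_mono.
have : (v_inv x : nat) != v_inv y.
  by apply: contra x_neq_y => /eqP/ord_inj/(can_inj v_invK)->.
by move: (before_i _ Dx) (before_i _ Dy) i_lt2; lia.
Qed.
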